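(* Let $m\ge 1$ and $n,k$ be positive integers. For $v=1,\dots,m$ let $X^{(v)}$ be a real $n\times p_v$ centered data matrix ($n$ samples, $p_v$ variables), let $X=[X^{(1)},\dots,X^{(m)}]$ be the $n\times p$ multiview data matrix with $p=p_1+\cdots+p_m$, and let $K^{(v)}=X^{(v)}{X^{(v)}}^T$. Let $X=UDV^T$ be a singular value decomposition of $X$ ($U$ an $n\times n$ orthogonal matrix, $V$ a $p\times p$ orthogonal matrix, $D$ an $n\times p$ rectangular diagonal matrix) with singular values ordered $\sigma_1\ge\sigma_2\ge\cdots$, so that the columns of $U$ are eigenvectors of $XX^T$ and the columns of $V$ are eigenvectors of $X^TX$ ordered by non-increasing eigenvalue. Let $U_k$ be the $n\times k$ matrix of the first $k$ columns of $U$, let $Q$ be an arbitrary $k\times k$ orthogonal matrix, and put $H=U_kQ$. Write $V^T=[{V^{(1)}}^T,\dots,{V^{(m)}}^T]$ where ${V^{(v)}}^T$ is the $p\times p_v$ block of columns of $V^T$ corresponding to the variables of view $v$, and let ${V_{1:k}^{(v)}}^T$ be the $k\times p_v$ matrix consisting of the top $k$ rows of ${V^{(v)}}^T$. Then for every $v=1,\dots,m$, $$\mathrm{tr}\big(H^TK^{(v)}H\big)=\mathrm{tr}\big({V_{1:k}^{(v)}}^T{X^{(v)}}^TX^{(v)}V_{1:k}^{(v)}\big)+\sum_{w\neq v}\mathrm{tr}\big({V_{1:k}^{(v)}}^T{X^{(v)}}^TX^{(w)}V_{1:k}^{(w)}\big).$$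
   Context: All matrices are real; $\mathrm{tr}$ denotes the trace. *)

From mathcomp Require Import all_boot all_order all_algebra.
Set Implicit Arguments. Unset Strict Implicit. Unset Printing Implicit Defensive.
Import Order.TTheory GRing.Theory Num.Theory.
Local Open Scope ring_scope.

Section Defs.
Variable R : realFieldType.

Definition centered n q (A : 'M[R]_(n, q)) : Prop :=
  forall j : 'I_q, \sum_(i < n) A i j = 0.

Definition orthogonal_mx n (A : 'M[R]_n) : Prop := A^T *m A = 1%:M.

Definition svd_diag n p (D : 'M[R]_(n, p)) : Prop :=
  [/\ forall (i : 'I_n) (j : 'I_p), (i : nat) != j -> D i j = 0,
      forall (i : 'I_n) (j : 'I_p), (i : nat) = j -> 0 <= D i j &
      forall (i1 i2 : 'I_n) (j1 j2 : 'I_p),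
        (i1 : nat) = j1 -> (i2 : nat) = j2 -> (i1 <= i2)%N -> D i2 j2 <= D i1 j1].

Definition firstcols n q k (hk : (k <= q)%N) (A : 'M[R]_(n, q)) : 'M[R]_(n, k) :=
  \matrix_(i < n, j < k) A i (widen_ord hk j).

Definition toprows q r k (hk : (k <= q)%N) (A : 'M[R]_(q, r)) : 'M[R]_(k, r) :=
  \matrix_(i < k, j < r) A (widen_ord hk i) j.

End Defs.

From mathcomp Require Import all_boot all_order all_algebra.
Import Order.TTheory GRing.Theory Num.Theory.
Local Open Scope ring_scope.

(* Write E := U_k, S for the leading k x k block of D and W for the top k rows
   of V^T.  Since U and V are orthogonal and D is diagonal, X = U D V^T gives
   E^T X = S W and X W^T = E S.  Restricting the first identity to the columns
   of view v, the left-hand side is tr(S W_v W_v^T S^T) (Q drops out), while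
   the right-hand side collapses, by the second identity, to
   tr(W_v X_v^T E S) = tr(W_v W_v^T S^T S); the two agree by cyclicity. *)

Definition topleft (R : realFieldType) n p k (hkn : (k <= n)%N) (hkp : (k <= p)%N)
    (D : 'M[R]_(n, p)) : 'M[R]_k :=
  \matrix_(i, j) D (widen_ord hkn i) (widen_ord hkp j).
Arguments topleft {R n p k}.

Section Blocks.
Variable R : realFieldType.

Lemma toprows_mul q r s k (hk : (k <= q)%N) (A : 'M[R]_(q, r)) (B : 'M[R]_(r, s)) :
  toprows hk (A *m B) = toprows hk A *m B.
Proof. by apply/matrixP=> i j; rewrite !mxE; apply: eq_bigr => l _; rewrite !mxE. Qed.

Lemma firstcols_mul q r s k (hk : (k <= s)%N) (A : 'M[R]_(q, r)) (B : 'M[R]_(r, s)) :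
  firstcols hk (A *m B) = A *m firstcols hk B.
Proof. by apply/matrixP=> i j; rewrite !mxE; apply: eq_bigr => l _; rewrite !mxE. Qed.

Lemma tr_firstcols q r k (hk : (k <= r)%N) (A : 'M[R]_(q, r)) :
  (firstcols hk A)^T = toprows hk A^T.
Proof. by apply/matrixP=> i j; rewrite !mxE. Qed.

Lemma toprows_submxrow m q k (p_ : 'I_m -> nat) (hk : (k <= q)%N)
    (A : 'M[R]_(q, \sum_(v < m) p_ v)) (v : 'I_m) :
  toprows hk (submxrow A v) = submxrow (toprows hk A) v.
Proof. by apply/matrixP=> i j; rewrite !mxE. Qed.

Variables (n p k : nat) (hkn : (k <= n)%N) (hkp : (k <= p)%N) (D : 'M[R]_(n, p)).
Hypothesis D_diag : forall (i : 'I_n) (j : 'I_p), (i : nat) != j -> D i j = 0.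

Lemma toprows_diag_mul s (M : 'M[R]_(p, s)) :
  toprows hkn D *m M = topleft hkn hkp D *m toprows hkp M.
Proof.
apply/matrixP=> i c; rewrite !mxE (bigD1 (widen_ord hkp i)) // (bigD1 i) //= !mxE.
rewrite [in LHS]big1 ?[in RHS]big1 ?addr0 // => j ji; rewrite !mxE D_diag ?mul0r //=;
  by apply: contra ji => /eqP eq_ij; apply/eqP/val_inj.
Qed.

Lemma mul_firstcols_diag s (N : 'M[R]_(s, n)) :
  N *m firstcols hkp D = firstcols hkn N *m topleft hkn hkp D.
Proof.
apply/matrixP=> a j; rewrite !mxE (bigD1 (widen_ord hkn j)) // (bigD1 j) //= !mxE.
rewrite [in LHS]big1 ?[in RHS]big1 ?addr0 // => i ij; rewrite !mxE D_diag ?mulr0 //=;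
  by apply: contra ij => /eqP eq_ij; apply/eqP/val_inj.
Qed.

End Blocks.

Section SVD.
Context {R : realFieldType} {n p k : nat}.
Variables (hkn : (k <= n)%N) (hkp : (k <= p)%N).
Context {A : 'M[R]_(n, p)} {U : 'M[R]_n} {D : 'M[R]_(n, p)} {V : 'M[R]_p}.
Hypotheses (U_orth : orthogonal_mx U) (V_orth : orthogonal_mx V).
Hypothesis D_diag : forall (i : 'I_n) (j : 'I_p), (i : nat) != j -> D i j = 0.
Hypothesis A_svd : A = U *m D *m V^T.

Lemma svd_left :
  (firstcols hkn U)^T *m A = topleft hkn hkp D *m toprows hkp V^T.
Proof.
rewrite tr_firstcols -toprows_mul A_svd !mulmxA U_orth mul1mx toprows_mul.
exact: toprows_diag_mul.
Qed.

Lemma svd_right :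
  A *m (toprows hkp V^T)^T = firstcols hkn U *m topleft hkn hkp D.
Proof.
rewrite -[V^T]trmxK -tr_firstcols !trmxK -firstcols_mul A_svd -!mulmxA.
rewrite V_orth mulmx1 firstcols_mul.
exact: mul_firstcols_diag.
Qed.

End SVD.

Lemma mxrow_mul_tr (R : realFieldType) (m n k : nat) (p_ : 'I_m -> nat)
    (A_ : forall v : 'I_m, 'M[R]_(n, p_ v)) (W : 'M[R]_(k, \sum_(v < m) p_ v)) :
  mxrow A_ *m W^T = \sum_v A_ v *m (submxrow W v)^T.
Proof. by rewrite -[W in LHS]submxrowK tr_mxrow mul_mxrow_mxcol. Qed.

Lemma mxtrace_orthogonal_conj (R : realFieldType) (n k : nat)
    (E : 'M[R]_(n, k)) (Q : 'M[R]_k) (M : 'M[R]_n) :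
  orthogonal_mx Q -> \tr ((E *m Q)^T *m M *m (E *m Q)) = \tr (E^T *m M *m E).
Proof.
move=> /mulmx1C Q_orth.
by rewrite trmx_mul !mulmxA mxtrace_mulC !mulmxA Q_orth mul1mx.
Qed.

Lemma mxtrace_mul_trmx_mulC (R : realFieldType) (k q : nat)
    (S : 'M[R]_k) (P : 'M[R]_(k, q)) :
  \tr (P *m (S *m P)^T *m S) = \tr (S *m P *m (S *m P)^T).
Proof. by rewrite mxtrace_mulC mulmxA. Qed.

Theorem proposition1 (R : realFieldType) (m n k : nat) (p_ : 'I_m -> nat)
    (X_ : forall v : 'I_m, 'M[R]_(n, p_ v))
    (U : 'M[R]_n) (D : 'M[R]_(n, \sum_(v < m) p_ v)) (V : 'M[R]_(\sum_(v < m) p_ v))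
    (Q : 'M[R]_k)
    (hkn : (k <= n)%N) (hkp : (k <= \sum_(v < m) p_ v)%N) :
  (0 < m)%N -> (0 < n)%N -> (0 < k)%N -> (forall v, 0 < p_ v)%N ->
  (forall v, centered (X_ v)) ->
  orthogonal_mx U -> orthogonal_mx V -> svd_diag D ->
  mxrow X_ = U *m D *m V^T ->
  orthogonal_mx Q ->
  let H := firstcols hkn U *m Q in
  let K := fun v => X_ v *m (X_ v)^T in
  let Vk := fun v => toprows hkp (submxrow V^T v) in
  forall v : 'I_m,
    \tr (H^T *m K v *m H) =
      \tr (Vk v *m (X_ v)^T *m X_ v *m (Vk v)^T)
      + \sum_(w < m | w != v) \tr (Vk v *m (X_ v)^T *m X_ w *m (Vk w)^T).
Proof.
move=> _ _ _ _ _ U_orth V_orth [D_diag _ _] X_svd Q_orth H K Vk v.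
set E := firstcols hkn U; set S := topleft hkn hkp D; set W := toprows hkp V^T.
have Vk_W w : Vk w = submxrow W w by rewrite /Vk toprows_submxrow.
have left_v : E^T *m X_ v = S *m Vk v.
  rewrite Vk_W mul_submxrow -mxrowK mul_submxrow.
  by rewrite (svd_left hkn hkp U_orth D_diag X_svd).
have right_sum : \sum_w X_ w *m (Vk w)^T = E *m S.
  under eq_bigr do rewrite Vk_W.
  by rewrite -mxrow_mul_tr (svd_right hkn hkp V_orth D_diag X_svd).
have -> : \tr (Vk v *m (X_ v)^T *m X_ v *m (Vk v)^T)
      + \sum_(w < m | w != v) \tr (Vk v *m (X_ v)^T *m X_ w *m (Vk w)^T)
    = \tr (Vk v *m (X_ v)^T *m \sum_w X_ w *m (Vk w)^T).
  rewrite mulmx_sumr raddf_sum [RHS](bigD1 v) //= !mulmxA.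
  by congr (_ + _); apply: eq_bigr => w _; rewrite !mulmxA.
rewrite right_sum /H /K mxtrace_orthogonal_conj // !mulmxA.
have -> : E^T *m X_ v *m (X_ v)^T *m E = E^T *m X_ v *m (E^T *m X_ v)^T.
  by rewrite trmx_mul trmxK !mulmxA.
have -> : Vk v *m (X_ v)^T *m E *m S = Vk v *m (E^T *m X_ v)^T *m S.
  by rewrite trmx_mul trmxK !mulmxA.
by rewrite left_v mxtrace_mul_trmx_mulC.
Qed.
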